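(* Let $L\subseteq Q$ be a dense extension of Lie algebras with $Q$ multiplicatively semiprime. Then $A_0$ is a semiprime associative algebra.
   Context: Lie algebras over a commutative unital ring $\Phi$. $\mathrm{ad}_x(y)=[x,y]$; $A(Q)$ is the associative subalgebra of $\mathrm{End}_\Phi(Q)$ generated by all $\mathrm{ad}_x$, $x\in Q$; $M(Q)$ is the subalgebra generated by the identity and all $\mathrm{ad}_x$. $A_0=\{\mu\in A(Q):\mu(L)\subseteq L\}$. An extension $L\subseteq Q$ is dense if the only $\mu\in M(Q)$ with $\mu(L)=0$ is $\mu=0$. A Lie algebra $Q$ is semiprime if $[I,I]\ne0$ for every nonzero ideal $I$; $Q$ is multiplicatively semiprime if both $Q$ and the associative algebra $M(Q)$ are semiprime. *)

From HB Require Import structures.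
From mathcomp Require Import all_boot all_algebra.
Set Implicit Arguments. Unset Strict Implicit. Unset Printing Implicit Defensive.
Import GRing.Theory.
Local Open Scope ring_scope.

Definition is_lie (R : comPzRingType) (V : lmodType R) (br : V -> V -> V) : Prop :=
  (forall (a : R) (x y z : V), br (a *: x + y) z = a *: br x z + br y z) /\
  (forall (a : R) (x y z : V), br x (a *: y + z) = a *: br x y + br x z) /\
  (forall x : V, br x x = 0) /\
  (forall x y z : V, br x (br y z) + br y (br z x) + br z (br x y) = 0).

Definition submod (R : comPzRingType) (V : lmodType R) (S : V -> Prop) : Prop :=
  S 0 /\ (forall (a : R) (x y : V), S x -> S y -> S (a *: x + y)).

Definition lie_subalg (R : comPzRingType) (V : lmodType R) (br : V -> V -> V)
  (L : V -> Prop) : Prop :=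
  submod L /\ (forall x y, L x -> L y -> L (br x y)).

Definition lie_ideal (R : comPzRingType) (V : lmodType R) (br : V -> V -> V)
  (I : V -> Prop) : Prop :=
  submod I /\ (forall x y, I y -> I (br x y)).

(* Semiprime Lie algebra: [I,I] <> 0 for every nonzero ideal I
   ([I,I] is the span of the brackets, so it is nonzero iff some bracket is). *)
Definition lie_semiprime (R : comPzRingType) (V : lmodType R) (br : V -> V -> V) : Prop :=
  forall I : V -> Prop, lie_ideal br I -> (exists x, I x /\ x <> 0) ->
    exists x y, I x /\ I y /\ br x y <> 0.

Definition ad (R : comPzRingType) (V : lmodType R) (br : V -> V -> V) (x : V) : V -> V :=
  br x.

Inductive inA (R : comPzRingType) (V : lmodType R) (br : V -> V -> V) : (V -> V) -> Prop :=
  | inA_ad : forall x, inA br (ad br x)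
  | inA_zero : inA br (fun _ => 0)
  | inA_add : forall f g, inA br f -> inA br g -> inA br (fun v => f v + g v)
  | inA_scale : forall (a : R) f, inA br f -> inA br (fun v => a *: f v)
  | inA_comp : forall f g, inA br f -> inA br g -> inA br (fun v => f (g v)).

Inductive inM (R : comPzRingType) (V : lmodType R) (br : V -> V -> V) : (V -> V) -> Prop :=
  | inM_id : inM br (fun v => v)
  | inM_ad : forall x, inM br (ad br x)
  | inM_zero : inM br (fun _ => 0)
  | inM_add : forall f g, inM br f -> inM br g -> inM br (fun v => f v + g v)
  | inM_scale : forall (a : R) f, inM br f -> inM br (fun v => a *: f v)
  | inM_comp : forall f g, inM br f -> inM br g -> inM br (fun v => f (g v)).

Definition inA0 (R : comPzRingType) (V : lmodType R) (br : V -> V -> V)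
  (L : V -> Prop) (f : V -> V) : Prop :=
  inA br f /\ (forall v, L v -> L (f v)).

Definition alg_ideal (R : comPzRingType) (V : lmodType R)
  (S I : (V -> V) -> Prop) : Prop :=
  (forall f, I f -> S f) /\
  I (fun _ => 0) /\
  (forall (a : R) f g, I f -> I g -> I (fun v => a *: f v + g v)) /\
  (forall f g, S f -> I g -> I (fun v => f (g v))) /\
  (forall f g, I f -> S g -> I (fun v => f (g v))).

Definition alg_semiprime (R : comPzRingType) (V : lmodType R)
  (S : (V -> V) -> Prop) : Prop :=
  forall I : (V -> V) -> Prop, alg_ideal S I ->
    (exists f, I f /\ f <> (fun _ => 0)) ->
    exists f g, I f /\ I g /\ (fun v => f (g v)) <> (fun _ : V => 0).

Definition mult_semiprime (R : comPzRingType) (V : lmodType R) (br : V -> V -> V) : Prop :=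
  lie_semiprime br /\ alg_semiprime (inM br).

Definition dense_ext (R : comPzRingType) (V : lmodType R) (br : V -> V -> V)
  (L : V -> Prop) : Prop :=
  forall f, inM br f -> (forall v, L v -> f v = 0) -> f = (fun _ => 0).

From mathcomp Require Import all_boot all_algebra.
From Stdlib Require Import Classical FunctionalExtensionality.
Set Implicit Arguments. Unset Strict Implicit. Unset Printing Implicit Defensive.
Import GRing.Theory.
Local Open Scope ring_scope.

(* Suppose I is an ideal of A_0 with I I = 0. For a, b in I, the set of mu in
   M(Q) with a mu b = 0 contains the identity and is stable under right
   composition with every ad_x: a mu ad_x b vanishes on L because
   [x, b u] = -ad_(b u) x, and a mu ad_(b u) vanishes on L because
   ad_z b lies in I for z in L; density then kills both maps on all of Q.
   Hence a M(Q) a = 0 for every a in I, and since M(Q) is semiprime and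
   unital this forces a = 0. *)

Section LinearFun.
Variables (R : comPzRingType) (V : lmodType R) (f : V -> V).
Hypothesis f_lin : linear f.

Lemma linear_fun0 : f 0 = 0.
Proof. by have := scalable_linear f_lin 0 0; rewrite /= !scale0r. Qed.

Lemma linear_funD x y : f (x + y) = f x + f y.
Proof. by have := f_lin 1 x y; rewrite /= !scale1r. Qed.

Lemma linear_funZ a x : f (a *: x) = a *: f x.
Proof. exact: (scalable_linear f_lin). Qed.

Lemma linear_funN x : f (- x) = - f x.
Proof. by rewrite -scaleN1r linear_funZ scaleN1r. Qed.

End LinearFun.

Section LieOperators.
Variables (R : comPzRingType) (V : lmodType R) (br : V -> V -> V).
Hypothesis br_lie : is_lie br.

Lemma lie_brC x y : br x y = - br y x.
Proof.
have [brDl [brDr [br_alt _]]] := br_lie.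
have brD u w z t : br (u + w) (z + t) = br u z + br u t + (br w z + br w t).
  by rewrite -[u]scale1r brDl -[z]scale1r !brDr !scale1r.
have := br_alt (x + y); rewrite brD !br_alt add0r addr0 => /eqP.
by rewrite addr_eq0 => /eqP.
Qed.

Lemma inM_linear f : inM br f -> linear f.
Proof.
have [_ [brDr _]] := br_lie; elim=> [a x y //|x a y z|a x y|g h _ Dg _ Dh a x y
  |b g _ Dg a x y|g h _ Dg _ Dh a x y] /=.
- exact: brDr.
- by rewrite scaler0 addr0.
- by rewrite Dg Dh scalerDr addrACA.
- by rewrite Dg scalerDr !scalerA mulrC.
- by rewrite Dh Dg.
Qed.

Lemma inA_inM f : inA br f -> inM br f.
Proof.
by elim=> *; [apply: inM_ad | apply: inM_zero | apply: inM_add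
  | apply: inM_scale | apply: inM_comp].
Qed.

End LieOperators.

Definition sandwich0 (R : comPzRingType) (V : lmodType R) (S : (V -> V) -> Prop)
    (f g : V -> V) :=
  forall lam, S lam -> forall v, f (lam (g v)) = 0.

Section UnitalSemiprime.
Variables (R : comPzRingType) (V : lmodType R) (S : (V -> V) -> Prop).
Hypotheses (S_id : S id) (S_zero : S (fun _ => 0))
  (S_add : forall f g, S f -> S g -> S (fun v => f v + g v))
  (S_scale : forall a f, S f -> S (fun v => a *: f v))
  (S_comp : forall f g, S f -> S g -> S (fun v => f (g v)))
  (S_linear : forall f, S f -> linear f).

(* The elements of S that inherit every one-sided sandwich annihilator of [a]:
   an ideal containing [a] which squares to zero as soon as a S a = 0. *)
Definition sandwich_closure (a f : V -> V) :=
  [/\ S f, forall h, S h -> sandwich0 S h a -> sandwich0 S h f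
         & forall h, S h -> sandwich0 S a h -> sandwich0 S f h].

Lemma sandwich_closure_ideal a : S a -> alg_ideal S (sandwich_closure a).
Proof.
move=> Sa; split; first by move=> f [].
split; first split=> // h Sh _ lam Slam v.
  by rewrite /= (linear_fun0 (S_linear (S_comp Sh Slam))).
split.
  move=> c f g [Sf Lf Rf] [Sg Lg Rg]; split.
  - by apply: S_add => //; apply: S_scale.
  - move=> h Sh ha lam Slam v /=.
    have hlam_lin := S_linear (S_comp Sh Slam).
    rewrite (linear_funD hlam_lin) (linear_funZ hlam_lin).
    by rewrite (Lf h) // (Lg h) // scaler0 addr0.
  - move=> h Sh ah lam Slam v /=.
    by rewrite (Rf h) // (Rg h) // scaler0 addr0.
split.
  move=> mu f Smu [Sf Lf Rf]; split; first exact: S_comp.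
  - by move=> h Sh ha lam Slam v; apply: (Lf h Sh ha _ (S_comp Slam Smu)).
  - by move=> h Sh ah lam Slam v /=; rewrite (Rf h) // (linear_fun0 (S_linear Smu)).
move=> f mu [Sf Lf Rf] Smu; split; first exact: S_comp.
- by move=> h Sh ha lam Slam v; apply: (Lf h Sh ha lam Slam).
- by move=> h Sh ah lam Slam v; apply: (Rf h Sh ah _ (S_comp Smu Slam)).
Qed.

Lemma sandwich_closure_mul0 a f g : S a -> sandwich0 S a a ->
  sandwich_closure a f -> sandwich_closure a g -> (fun v => f (g v)) = (fun _ => 0).
Proof.
move=> Sa aSa [_ _ Rf] [Sg Lg _]; apply: functional_extensionality => v.
exact: (Rf g Sg (Lg a Sa aSa) id S_id).
Qed.

Lemma semiprime_sandwich0 a : alg_semiprime S -> S a -> sandwich0 S a a ->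
  a = (fun _ => 0).
Proof.
move=> S_semiprime Sa aSa; apply: NNPP => a_neq0.
have [|f [g [Kf [Kg fg_neq0]]]] := S_semiprime _ (sandwich_closure_ideal Sa).
  by exists a; split=> //; split=> // h _ ?.
exact/fg_neq0/(sandwich_closure_mul0 Sa aSa).
Qed.

End UnitalSemiprime.

Definition ideal_sandwich0 (R : comPzRingType) (V : lmodType R)
    (I : (V -> V) -> Prop) (m : V -> V) :=
  forall a b, I a -> I b -> forall v, a (m (b v)) = 0.

Section DenseSquareZeroIdeal.
Variables (R : comPzRingType) (V : lmodType R) (br : V -> V -> V) (L : V -> Prop).
Hypotheses (br_lie : is_lie br) (L_br : forall x y, L x -> L y -> L (br x y))
  (L_dense : dense_ext br L).
Variable I : (V -> V) -> Prop.
Hypotheses (I_ideal : alg_ideal (inA0 br L) I)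
  (I_mul0 : forall f g, I f -> I g -> forall v, f (g v) = 0).

Lemma dense_vanish f : inM br f -> (forall v, L v -> f v = 0) -> forall v, f v = 0.
Proof. by move=> Mf /(L_dense Mf) ->. Qed.

Lemma ideal_inM f : I f -> inM br f.
Proof. by have [I_A0 _] := I_ideal; move=> /I_A0 [/inA_inM]. Qed.

Lemma ideal_linear f : I f -> linear f.
Proof. by move=> /ideal_inM /(inM_linear br_lie). Qed.

Lemma ideal_sandwich0_adL m a b v : inM br m -> ideal_sandwich0 I m ->
  I a -> I b -> L v -> forall z, a (m (br (b v) z)) = 0.
Proof.
move=> Mm Im Ia Ib Lv; apply: dense_vanish.
  by apply: (inM_comp (ideal_inM Ia)); apply: (inM_comp Mm); apply: inM_ad.
move=> z Lz; rewrite lie_brC // (linear_funN (inM_linear br_lie Mm)).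
rewrite (linear_funN (ideal_linear Ia)).
have [_ [_ [_ [I_mulL _]]]] := I_ideal.
have I_adb : I (fun u => ad br z (b u)).
  by apply: I_mulL Ib; split=> [|u Lu]; [exact: inA_ad | exact: L_br].
by rewrite (Im _ _ Ia I_adb) oppr0.
Qed.

Lemma ideal_sandwich0_compr_ad m x : inM br m -> ideal_sandwich0 I m ->
  ideal_sandwich0 I (fun v => m (br x v)).
Proof.
move=> Mm Im a b Ia Ib; apply: dense_vanish.
  apply: (inM_comp (ideal_inM Ia)); apply: (inM_comp Mm).
  exact: (inM_comp (inM_ad br x) (ideal_inM Ib)).
move=> u Lu; rewrite /= lie_brC // (linear_funN (inM_linear br_lie Mm)).
by rewrite (linear_funN (ideal_linear Ia)) (ideal_sandwich0_adL Mm Im Ia Ib Lu) oppr0.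
Qed.

Lemma ideal_sandwich0_compr lam m : inM br lam -> inM br m ->
  ideal_sandwich0 I m -> ideal_sandwich0 I (fun v => m (lam v)).
Proof.
move=> Mlam; elim: Mlam m => {lam} [//|x|
  |f g _ IHf _ IHg|c f _ IHf|f g Mf IHf _ IHg] m Mm Im a b Ia Ib v /=.
- exact: (ideal_sandwich0_compr_ad x Mm Im Ia Ib v).
- by rewrite (linear_fun0 (inM_linear br_lie Mm)) (linear_fun0 (ideal_linear Ia)).
- rewrite (linear_funD (inM_linear br_lie Mm)) (linear_funD (ideal_linear Ia)).
  by rewrite (IHf m) // (IHg m) // addr0.
- rewrite (linear_funZ (inM_linear br_lie Mm)) (linear_funZ (ideal_linear Ia)).
  by rewrite (IHf m) // scaler0.
- exact: (IHg _ (inM_comp Mm Mf) (IHf m Mm Im) a b Ia Ib v).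
Qed.

Lemma ideal_sandwich0_inM m : inM br m -> ideal_sandwich0 I m.
Proof. by move=> Mm; apply: (ideal_sandwich0_compr Mm (inM_id br) I_mul0). Qed.

End DenseSquareZeroIdeal.

Theorem mainTheorem15 (R : comPzRingType) (V : lmodType R) (br : V -> V -> V)
  (L : V -> Prop) :
  is_lie br -> lie_subalg br L -> dense_ext br L -> mult_semiprime br ->
  alg_semiprime (inA0 br L).
Proof.
move=> br_lie [_ L_br] L_dense [_ M_semiprime] I I_ideal [a [Ia a_neq0]].
apply: NNPP => I_not_semiprime.
have I_mul0 f g : I f -> I g -> forall v, f (g v) = 0.
  move=> If Ig; apply: (@equal_f _ _ _ (fun _ => 0)).
  by apply: NNPP => fg_neq0; apply: I_not_semiprime; exists f, g.
have aMa : sandwich0 (inM br) a a.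
  by move=> lam Mlam; apply: (ideal_sandwich0_inM br_lie L_br L_dense I_ideal I_mul0 Mlam).
apply/a_neq0/(semiprime_sandwich0 (inM_id br) (inM_zero br) (@inM_add _ _ br)
  (@inM_scale _ _ br) (@inM_comp _ _ br) (inM_linear br_lie) M_semiprime _ aMa).
exact: ideal_inM I_ideal _ Ia.
Qed.
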